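(* Let $f:\mathbb F_2^6\to\mathbb F_2$ be $f(x_1,\dots,x_6)=(x_2\oplus x_2x_5\oplus x_4x_5)x_6\oplus x_3x_5(1\oplus x_6)\oplus x_1(1\oplus x_5)(1\oplus x_6)$. Let $r\ge6$ be even, $n=r+2$. (i) Let $h_1,h_2,h_3,h_4:\mathbb F_2^r\to\mathbb F_2$ be plateaued functions with pairwise disjoint Walsh supports, where $h_1,h_2,h_3$ are $2$-plateaued and $h_4$ is $4$-plateaued, and let $\mathfrak f(x,y)=f(h_1(x),h_2(x),h_3(x),h_4(x),y_1,y_2)$ for $(x,y)\in\mathbb F_2^r\times\mathbb F_2^2$. Then $W_{\mathfrak f}(u,v)\in\{0,\pm2^{n/2},\pm2^{(n+2)/2}\}$ for all $(u,v)$. (ii) For $i=1,\dots,4$ let $h_{1,i},h_{2,i},h_{3,i},h_{4,i}:\mathbb F_2^r\to\mathbb F_2$ satisfy the hypotheses of (i) (for each fixed $i$), and let $\mathfrak f_i(x,y)=f(h_{1,i}(x),\dots,h_{4,i}(x),y_1,y_2)$. Assume further that $h_{4,1},\dots,h_{4,4}$ have pairwise disjoint Walsh supports, and that for each $p\in\{1,2,3\}$: $S_{h_{p,1}}=S_{h_{p,2}}=S_{h_{p,3}}=S_{h_{p,4}}$ and $h^*_{p,1}\oplus h^*_{p,2}\oplus h^*_{p,3}\oplus h^*_{p,4}=1$ on this common support. Then: (a) the sets $S^{[1]}_{\mathfrak f_i}=\{w\in\mathbb F_2^n:|W_{\mathfrak f_i}(w)|=2^{(n+2)/2}\}$, $i=1,\dots,4$,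 are pairwise disjoint; (b) the sets $S^{[2]}_{\mathfrak f_i}=\{w:|W_{\mathfrak f_i}(w)|=2^{n/2}\}$ are all equal to a common set $S$, and the functions $\mathfrak f^*_{[2],i}:S\to\mathbb F_2$ defined by $W_{\mathfrak f_i}(w)=2^{n/2}(-1)^{\mathfrak f^*_{[2],i}(w)}$ satisfy $\mathfrak f^*_{[2],1}\oplus\dots\oplus\mathfrak f^*_{[2],4}=1$ on $S$. *)

(* F_2 is modelled by bool (xor = addb), F_2^m by {ffun 'I_m -> bool}. *)
From HB Require Import structures.
From mathcomp Require Import all_boot all_order all_algebra.
Set Implicit Arguments. Unset Strict Implicit. Unset Printing Implicit Defensive.
Import Order.TTheory GRing.Theory Num.Theory.
Local Open Scope ring_scope.

Definition bvec (m : nat) := {ffun 'I_m -> bool}.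

Definition dotb (m : nat) (u x : bvec m) : bool :=
  \big[addb/false]_(i < m) (u i && x i).

Definition walsh (m : nat) (f : bvec m -> bool) (u : bvec m) : int :=
  \sum_(x : bvec m) (-1) ^+ (f x (+) dotb u x).

Definition wsupp (m : nat) (f : bvec m -> bool) : {set bvec m} :=
  [set u | walsh f u != 0].

Definition plateaued (m s : nat) (f : bvec m -> bool) : Prop :=
  forall u, walsh f u = 0 \/ `|walsh f u| = (2 ^ ((m + s)./2))%:Z.

(* dual on the support: W_f(u) = |W_f(u)| (-1)^{f*(u)} *)
Definition wdual (m : nat) (f : bvec m -> bool) (u : bvec m) : bool :=
  walsh f u < 0.

Definition f6 (x1 x2 x3 x4 x5 x6 : bool) : bool :=
  ((x2 (+) (x2 && x5) (+) (x4 && x5)) && x6)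
  (+) (x3 && x5 && ~~ x6)
  (+) (x1 && ~~ x5 && ~~ x6).

Definition xpart (r : nat) (w : bvec (r + 2)) : bvec r := [ffun i => w (lshift 2 i)].
Definition ypart (r : nat) (w : bvec (r + 2)) : bvec 2 := [ffun j => w (rshift r j)].

Definition fcomp (r : nat) (h1 h2 h3 h4 : bvec r -> bool) (w : bvec (r + 2)) : bool :=
  let x := xpart w in let y := ypart w in
  f6 (h1 x) (h2 x) (h3 x) (h4 x) (y ord0) (y (@Ordinal 2 1 isT)).

Definition hyp_i (r : nat) (h1 h2 h3 h4 : bvec r -> bool) : Prop :=
  plateaued 2 h1 /\ plateaued 2 h2 /\ plateaued 2 h3 /\ plateaued 4 h4 /\
  [disjoint wsupp h1 & wsupp h2] /\ [disjoint wsupp h1 & wsupp h3] /\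
  [disjoint wsupp h1 & wsupp h4] /\ [disjoint wsupp h2 & wsupp h3] /\
  [disjoint wsupp h2 & wsupp h4] /\ [disjoint wsupp h3 & wsupp h4].

From HB Require Import structures.
From mathcomp Require Import all_boot all_order all_algebra.
Import Order.TTheory GRing.Theory Num.Theory.
Local Open Scope ring_scope.
Set Implicit Arguments. Unset Strict Implicit. Unset Printing Implicit Defensive.

(* Splitting w = (u, v) with v in F_2^2, the Walsh transform of the composed
   function is a character sum over y in F_2^2, and for fixed y the function
   f(h_1(x), ..., h_4(x), y) is one of the h_p.  Hence
     W(u, v) = sum_p (-1)^(v . y_p) W_{h_p}(u),
   and disjointness of the Walsh supports leaves at most one nonzero term: its
   absolute value is the plateau amplitude of h_p, i.e. 2^(n/2) for h_1, h_2,
   h_3 and 2^((n+2)/2) for h_4.  So S^[1] consists of the (u, v) with u in the support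
   of h_4, and S^[2] of those with u in the supports of h_1, h_2, h_3; the dual
   of the composed function is the dual of h_p shifted by v . y_p, a bit that
   does not depend on i and therefore cancels in a sum of four terms. *)

Lemma ord4P (P : 'I_4 -> Prop) : P 0 -> P 1 -> P 2 -> P 3 -> forall p, P p.
Proof.
move=> P0 P1 P2 P3 [[|[|[|[|k]]]] lt] //.
- by rewrite (_ : Ordinal lt = 0) //; apply: val_inj.
- by rewrite (_ : Ordinal lt = 1) //; apply: val_inj.
- by rewrite (_ : Ordinal lt = 2) //; apply: val_inj.
- by rewrite (_ : Ordinal lt = 3) //; apply: val_inj.
Qed.

Lemma big_addb_const n b (d : 'I_n -> bool) :
  \big[addb/false]_(i < n) (b (+) d i) = (odd n && b) (+) \big[addb/false]_(i < n) d i.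
Proof.
rewrite big_split big_const_ord; congr (_ (+) _).
by elim: n {d} => //= n ->; case: b; case: (odd n).
Qed.

Lemma walsh_notin_wsupp m (f : bvec m -> bool) u : u \notin wsupp f -> walsh f u = 0.
Proof. by rewrite inE negbK => /eqP. Qed.

Section Join.
Variables m k : nat.

Definition bjoin (x : bvec m) (y : bvec k) : bvec (m + k) :=
  [ffun i => match split i with inl a => x a | inr b => y b end].

Lemma bjoin_lshift x y i : bjoin x y (lshift k i) = x i.
Proof. by rewrite ffunE (unsplitK (inl i)). Qed.

Lemma bjoin_rshift x y j : bjoin x y (rshift m j) = y j.
Proof. by rewrite ffunE (unsplitK (inr j)). Qed.

Lemma bjoin_split (w : bvec (m + k)) :
  bjoin [ffun i => w (lshift k i)] [ffun j => w (rshift m j)] = w.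
Proof.
apply/ffunP=> i; rewrite -[i in RHS]splitK ffunE.
by case: (split i) => [a|b]; rewrite ffunE.
Qed.

Lemma bjoin_bij : bijective (fun xy : bvec m * bvec k => bjoin xy.1 xy.2).
Proof.
exists (fun w : bvec (m + k) =>
  ([ffun i => w (lshift k i)] : bvec m, [ffun j => w (rshift m j)] : bvec k)).
  by move=> [x y]; congr (_, _); apply/ffunP=> i; rewrite ffunE ?bjoin_lshift ?bjoin_rshift.
exact: bjoin_split.
Qed.

Lemma dotb_bjoin u v x y : dotb (bjoin u v) (bjoin x y) = dotb u x (+) dotb v y.
Proof.
rewrite /dotb big_split_ord /=.
by congr (_ (+) _); apply: eq_bigr => i _; rewrite ?bjoin_lshift ?bjoin_rshift.
Qed.

Lemma walsh_bjoin (g : bvec (m + k) -> bool) u v :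
  walsh g (bjoin u v) =
  \sum_(y : bvec k) (-1) ^+ dotb v y * walsh (fun x => g (bjoin x y)) u.
Proof.
rewrite /walsh (reindex _ (onW_bij _ bjoin_bij)).
rewrite -(pair_bigA _ (fun x y => (-1) ^+ (g (bjoin x y) (+) dotb (bjoin u v) (bjoin x y)))).
rewrite exchange_big; apply: eq_bigr => y _; rewrite big_distrr /=.
by apply: eq_bigr => x _; rewrite dotb_bjoin addbA signr_addb mulrC.
Qed.

End Join.

Lemma bjoin_parts r (w : bvec (r + 2)) : bjoin (xpart w) (ypart w) = w.
Proof. exact: bjoin_split. Qed.

(* The value of [(x5, x6)] at which [f6] selects its argument number [p + 1]. *)
Definition ypt (p : 'I_4) : bvec 2 := [ffun j => if j == ord0 then (1 < p)%N else odd p].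

Lemma ypt_bij : bijective ypt.
Proof.
apply: inj_card_bij; last by rewrite card_ffun card_bool !card_ord.
move=> p q; elim/ord4P: p; elim/ord4P: q => // /ffunP E;
  by move: (E ord0) (E (@Ordinal 2 1 isT)); rewrite !ffunE.
Qed.

Lemma fcomp_bjoin_ypt r (h : 'I_4 -> bvec r -> bool) x p :
  fcomp (h 0) (h 1) (h 2) (h 3) (bjoin x (ypt p)) = h p x.
Proof.
rewrite /fcomp /=.
have -> : xpart (bjoin x (ypt p)) = x by apply/ffunP=> i; rewrite ffunE bjoin_lshift.
have -> : ypart (bjoin x (ypt p)) = ypt p by apply/ffunP=> j; rewrite ffunE bjoin_rshift.
rewrite /f6 !ffunE; elim/ord4P: p => /=;
  by case: (h 0 x); case: (h 1 x); case: (h 2 x); case: (h 3 x).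
Qed.

Lemma walsh_fcomp r (h : 'I_4 -> bvec r -> bool) w :
  walsh (fcomp (h 0) (h 1) (h 2) (h 3)) w =
  \sum_(p < 4) (-1) ^+ dotb (ypart w) (ypt p) * walsh (h p) (xpart w).
Proof.
rewrite -{1}(bjoin_parts w) walsh_bjoin (reindex _ (onW_bij _ ypt_bij)) /=.
by apply: eq_bigr => p _; congr (_ * _); apply: eq_bigr => x _; rewrite fcomp_bjoin_ypt.
Qed.

Definition plateau_level (p : 'I_4) : nat := if (p < 3)%N then 2 else 4.

Lemma plateau_amplitude_eq r p q :
  ((2 ^ ((r + plateau_level p)./2))%:Z == (2 ^ ((r + plateau_level q)./2))%:Z :> int)
  = ((p < 3)%N == (q < 3)%N).
Proof.
rewrite eqz_nat eqn_exp2l // /plateau_level.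
case: (p < 3)%N; case: (q < 3)%N; rewrite ?eqxx //= !addnS /=.
  by rewrite (ltn_eqF (ltnSn _)).
by rewrite (gtn_eqF (ltnSn _)).
Qed.

Section Family.
Variables (r : nat) (h : 'I_4 -> bvec r -> bool).
Hypothesis hyp : hyp_i (h 0) (h 1) (h 2) (h 3).
Local Notation F := (fcomp (h 0) (h 1) (h 2) (h 3)).

Lemma family_disjoint p q : p != q -> [disjoint wsupp (h p) & wsupp (h q)].
Proof.
have [_ [_ [_ [_ [D01 [D02 [D03 [D12 [D13 D23]]]]]]]]] := hyp.
by elim/ord4P: p; elim/ord4P: q; rewrite //= disjoint_sym.
Qed.

Lemma family_plateaued p : plateaued (plateau_level p) (h p).
Proof. by have [P0 [P1 [P2 [P3 _]]]] := hyp; elim/ord4P: p. Qed.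

Lemma wsupp_family_unique p q w :
  xpart w \in wsupp (h p) -> (xpart w \in wsupp (h q)) = (p == q).
Proof.
move=> Hp; have [<-|pq] := eqVneq p q; first exact: Hp.
exact: disjointFr (family_disjoint pq) Hp.
Qed.

Lemma walsh_fcomp_supp p w : xpart w \in wsupp (h p) ->
  walsh F w = (-1) ^+ dotb (ypart w) (ypt p) * walsh (h p) (xpart w).
Proof.
move=> Hp; rewrite walsh_fcomp (bigD1 p) //= big1 ?addr0 // => q qp.
by rewrite walsh_notin_wsupp ?mulr0 // (wsupp_family_unique _ Hp) eq_sym.
Qed.

Lemma walsh_fcomp_out w : (forall p, xpart w \notin wsupp (h p)) -> walsh F w = 0.
Proof.
by move=> out; rewrite walsh_fcomp big1 // => p _; rewrite walsh_notin_wsupp ?mulr0.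
Qed.

Lemma wdual_fcomp_supp p w : xpart w \in wsupp (h p) ->
  wdual F w = dotb (ypart w) (ypt p) (+) wdual (h p) (xpart w).
Proof.
by move=> Hp; rewrite /wdual (walsh_fcomp_supp Hp) mulr_sign_lt0; rewrite inE in Hp; rewrite Hp.
Qed.

Lemma norm_walsh_fcomp_supp p w : xpart w \in wsupp (h p) ->
  `|walsh F w| = (2 ^ ((r + plateau_level p)./2))%:Z.
Proof.
move=> Hp; rewrite (walsh_fcomp_supp Hp) normrMsign.
have [W0|//] := family_plateaued p (xpart w).
by rewrite inE W0 eqxx in Hp.
Qed.

Lemma norm_walsh_fcompE w :
  `|walsh F w| = if [pick p | xpart w \in wsupp (h p)] is Some p
                 then (2 ^ ((r + plateau_level p)./2))%:Z else 0.
Proof.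
case: pickP => [p /= Hp | out]; first exact: norm_walsh_fcomp_supp.
by rewrite walsh_fcomp_out ?normr0 // => p; rewrite out.
Qed.

Lemma walsh_fcomp_values w :
  walsh F w \in [:: 0; (2 ^ ((r + 2)./2))%:Z; - (2 ^ ((r + 2)./2))%:Z;
                    (2 ^ ((r + 4)./2))%:Z; - (2 ^ ((r + 4)./2))%:Z].
Proof.
case: (pickP (fun p => xpart w \in wsupp (h p))) => [p Hp | out]; last first.
  by rewrite walsh_fcomp_out ?inE ?eqxx // => p; rewrite out.
move/eqP: (norm_walsh_fcomp_supp Hp); rewrite eqr_norml /plateau_level.
by case: (p < 3)%N => /andP [/orP [] /eqP -> _]; rewrite !inE eqxx ?orbT.
Qed.

Lemma norm_walsh_fcomp_top w :
  (`|walsh F w| == (2 ^ ((r + 4)./2))%:Z) = (xpart w \in wsupp (h 3)).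
Proof.
rewrite -[(r + 4)%N]/(r + plateau_level 3%R)%N norm_walsh_fcompE.
case: pickP => [p /= Hp | out]; last by rewrite out eq_sym eqz_nat expn_eq0.
by rewrite plateau_amplitude_eq (wsupp_family_unique _ Hp); elim/ord4P: p {Hp}.
Qed.

Lemma norm_walsh_fcomp_mid w :
  (`|walsh F w| == (2 ^ ((r + 2)./2))%:Z) =
  [exists p : 'I_4, (p < 3)%N && (xpart w \in wsupp (h p))].
Proof.
rewrite -[(r + 2)%N]/(r + plateau_level 0%R)%N norm_walsh_fcompE.
case: pickP => [p /= Hp | out].
  rewrite plateau_amplitude_eq eqb_id; apply/idP/existsP => [p3 | [q /andP [q3]]].
    by exists p; rewrite p3 Hp.
  by rewrite (wsupp_family_unique _ Hp) => /eqP ->.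
rewrite eq_sym eqz_nat expn_eq0; apply/esym/existsP => -[q].
by rewrite out andbF.
Qed.

End Family.

Theorem mainTheorem8 :
  (forall (r : nat), ~~ odd r -> (6 <= r)%N ->
   forall h1 h2 h3 h4 : bvec r -> bool, hyp_i h1 h2 h3 h4 ->
   forall w : bvec (r + 2),
     walsh (fcomp h1 h2 h3 h4) w \in
       [:: 0; (2 ^ ((r + 2)./2))%:Z; - (2 ^ ((r + 2)./2))%:Z;
              (2 ^ ((r + 4)./2))%:Z; - (2 ^ ((r + 4)./2))%:Z])
  /\
  (forall (r : nat), ~~ odd r -> (6 <= r)%N ->
   forall h : 'I_4 -> 'I_4 -> (bvec r -> bool),
     (forall i, hyp_i (h 0 i) (h 1 i) (h 2 i) (h 3 i)) ->
     (forall i j, i != j -> [disjoint wsupp (h 3 i) & wsupp (h 3 j)]) ->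
     (forall p : 'I_4, (p < 3)%N ->
        (forall i, wsupp (h p i) = wsupp (h p 0)) /\
        (forall u, u \in wsupp (h p 0) ->
           \big[addb/false]_(i < 4) wdual (h p i) u = true)) ->
   let F i := fcomp (h 0 i) (h 1 i) (h 2 i) (h 3 i) in
   let S1 i := [set w | `|walsh (F i) w| == (2 ^ ((r + 4)./2))%:Z] in
   let S2 i := [set w | `|walsh (F i) w| == (2 ^ ((r + 2)./2))%:Z] in
   (forall i j, i != j -> [disjoint S1 i & S1 j]) /\
   (exists S : {set bvec (r + 2)},
      (forall i, S2 i = S) /\
      (forall w, w \in S -> \big[addb/false]_(i < 4) wdual (F i) w = true))).
Proof.
split.
  move=> r _ _ h1 h2 h3 h4 hyp w.
  pose h p := tnth [tuple h1; h2; h3; h4] p.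
  exact: (@walsh_fcomp_values _ h hyp).
move=> r _ _ h hyp disj3 hs F S1 S2; split.
  move=> i j ij; apply/pred0P => w /=; rewrite !inE.
  rewrite (@norm_walsh_fcomp_top _ (h^~ i) (hyp i)).
  rewrite (@norm_walsh_fcomp_top _ (h^~ j) (hyp j)).
  by apply/negbTE/andP => -[Hi Hj]; rewrite (disjointFr (disj3 i j ij) Hi) in Hj.
exists (S2 0); split.
  move=> i; apply/setP => w; rewrite !inE.
  rewrite (@norm_walsh_fcomp_mid _ (h^~ i) (hyp i)) (@norm_walsh_fcomp_mid _ (h^~ 0) (hyp 0)).
  by apply: eq_existsb => p; case: ltnP => //= p3; rewrite (proj1 (hs p p3) i).
move=> w; rewrite inE (@norm_walsh_fcomp_mid _ (h^~ 0) (hyp 0)) => /existsP [p /andP [p3 Hp]].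
have [supp_eq dual_sum] := hs p p3.
rewrite (eq_bigr (fun i => dotb (ypart w) (ypt p) (+) wdual (h p i) (xpart w))).
  by rewrite big_addb_const dual_sum.
by move=> i _; apply: (@wdual_fcomp_supp _ (h^~ i) (hyp i)); rewrite supp_eq.
Qed.
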